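(* Let $A$ be a physical system with Hamiltonian $H^A=\sum_{x=1}^m a_x|x\rangle\langle x|$ with all $a_x\ge0$, let $\psi=|\psi\rangle\langle\psi|$ be a pure state on $A$, and let $\alpha\in(1/2,1)$. Then there exists a sequence of pure states $\{\chi_n\}_{n\in\mathbb{N}}$, $\chi_n$ a pure state on $A^n$, such that: (1) $\lim_{n\to\infty}\|\psi^{\otimes n}-\chi_n\|_1=0$; (2) $\chi_n$ can be expressed as a linear combination of no more than $(n+1)^m$ eigenvectors of $H^{A^n}$; (3) the energy spread of $\chi_n$ is at most $4n^\alpha\sum_{x=1}^m a_x$.
   Context: $A^n$ denotes $n$ copies of $A$ with total Hamiltonian $H^{A^n}=\sum_{i=1}^n I\otimes\cdots\otimes H^A\otimes\cdots\otimes I$ ($H^A$ in the $i$-th slot). The energy spread of a pure state on a system with Hamiltonian $H$ is the difference between the largest and smallest eigenvalues $\lambda$ of $H$ for which the state has nonzero component in the $\lambda$-eigenspace (i.e. the maximal minus minimal energy appearing when the state is written as a superposition of energy eigenvectors). *)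

From HB Require Import structures.
From mathcomp Require Import all_boot all_order all_algebra.
From mathcomp Require Import all_classical all_reals all_analysis.
From mathcomp Require Import complex.
From Stdlib Require Import ClassicalEpsilon.

Set Implicit Arguments.
Unset Strict Implicit.
Unset Printing Implicit Defensive.

Import Order.TTheory GRing.Theory Num.Theory.
Local Open Scope ring_scope.

Section QuantumDefs.
Variable R : realType.
Local Notation C := R[i].

Definition rC (x : R) : C := Complex x 0.

(* Vectors and operators on the Hilbert space C^T with orthonormal basis
   indexed by the finite type T. *)
Definition vec (T : finType) := T -> C.
Definition op (T : finType) := T -> T -> C.

Definition inner (T : finType) (v w : vec T) : C := \sum_(i : T) Num.conj (v i) * w i.
Definition is_unit_vec (T : finType) (v : vec T) : Prop := inner v v = 1.

Definition opmul (T : finType) (A B : op T) : op T :=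
  fun i j => \sum_(k : T) A i k * B k j.
Definition opadj (T : finType) (A : op T) : op T := fun i j => Num.conj (A j i).
Definition opsub (T : finType) (A B : op T) : op T := fun i j => A i j - B i j.
Definition optr (T : finType) (A : op T) : C := \sum_(i : T) A i i.
Definition opapp (T : finType) (A : op T) (v : vec T) : vec T :=
  fun i => \sum_(j : T) A i j * v j.

Definition psd (T : finType) (A : op T) : Prop :=
  (forall i j, A i j = Num.conj (A j i)) /\
  (forall v : vec T, 0 <= inner v (opapp A v)).

(* the (unique) positive semidefinite square root, chosen by description *)
Definition sqrtm (T : finType) (A : op T) : op T :=
  epsilon (inhabits (fun _ _ => 0 : C))
    (fun S : op T => psd S /\ opmul S S = A).

Definition trnorm (T : finType) (X : op T) : R :=
  complex.Re (optr (sqrtm (opmul (opadj X) X))).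

Definition dens (T : finType) (v : vec T) : op T :=
  fun i j => v i * Num.conj (v j).

(* n copies of A = C^('I_m): basis indexed by sequences x^n in 'I_m^n *)
Definition seqs (n m : nat) := {ffun 'I_n -> 'I_m}.

Definition tens_pow (m : nat) (psi : vec 'I_m) (n : nat) : vec (seqs n m) :=
  fun s => \prod_(i < n) psi (s i).

Definition hamA (m : nat) (a : 'I_m -> R) : op 'I_m :=
  fun x y => if x == y then rC (a x) else 0.

(* H^{A^n} = sum_i I (x) .. (x) H^A (x) .. (x) I, which is diagonal in the
   product basis with eigenvalue sum_i a_{x_i} on |x_1 .. x_n> *)
Definition hamAn (m : nat) (a : 'I_m -> R) (n : nat) : op (seqs n m) :=
  fun s t => if s == t then rC (\sum_(i < n) a (s i)) else 0.

Definition eigenvector (T : finType) (H : op T) (v : vec T) : Prop :=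
  (exists i, v i != 0) /\ exists l : C, opapp H v = (fun i => l * v i).

Definition comb_of_eigvecs (T : finType) (H : op T) (v : vec T) (k : nat) : Prop :=
  exists (j : nat) (e : 'I_j -> vec T) (c : 'I_j -> C),
    (j <= k)%N /\ (forall i, eigenvector H (e i)) /\
    v = (fun t => \sum_(i < j) c i * e i t).

(* energies appearing in v: real l such that v has a nonzero component in
   the l-eigenspace of H (i.e. v is not orthogonal to that eigenspace) *)
Definition energies (T : finType) (H : op T) (v : vec T) : set R :=
  [set l | exists w : vec T, opapp H w = (fun i => rC l * w i) /\ inner w v != 0].

Definition energy_spread (T : finType) (H : op T) (v : vec T) : R :=
  sup (energies H v) - inf (energies H v).

End QuantumDefs.
Arguments tens_pow {R m} psi n _.
Arguments hamAn {R m} a n _ _.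

(* The state [chi n] is the normalized projection of psi^(x)n onto the basis vectors
   |x_1 .. x_n> whose energy sum_i a_(x_i) lies within 2 n^alpha sum_x a_x of its mean
   n mu.  Under the product distribution |psi_x|^2 this energy is a sum of n i.i.d.
   bounded variables, so Chebyshev bounds the discarded weight w_n by n^(1 - 2 alpha) / 4;
   and for unit vectors the trace distance of the pure states is 2 sqrt (1 - |<u,v>|^2),
   which here is 2 sqrt w_n -> 0.  H^(A^n) is diagonal in the product basis with an
   eigenvalue that only depends on the type (letter counts) of x_1 .. x_n, so grouping the
   coordinates of chi n by type gives at most (n+1)^m eigenvectors, and all its energies
   lie in an interval of length 4 n^alpha sum_x a_x. *)

From mathcomp Require Import all_boot all_order all_algebra.
From mathcomp Require Import all_classical all_reals all_analysis.
From mathcomp Require Import complex.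
From mathcomp Require Import ring lra.
From Stdlib Require Import ClassicalEpsilon.

Set Implicit Arguments.
Unset Strict Implicit.
Unset Printing Implicit Defensive.

Import Order.TTheory GRing.Theory Num.Theory.
Import numFieldNormedType.Exports.
Local Open Scope classical_set_scope.
Local Open Scope ring_scope.

Section ComplexScalars.
Variable R : realType.
Local Notation C := R[i].

Lemma rC1 : rC 1 = 1 :> C.
Proof. by []. Qed.

Lemma rC_nat n : rC n%:R = n%:R :> C.
Proof. exact: (rmorph_nat (real_complex R)). Qed.

Lemma rCM (x y : R) : rC (x * y) = rC x * rC y.
Proof. exact: (rmorphM (real_complex R)). Qed.

Lemma rCB (x y : R) : rC (x - y) = rC x - rC y.
Proof. exact: (rmorphB (real_complex R)). Qed.

Lemma rC_sum (I : finType) (P : pred I) (F : I -> R) :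
  rC (\sum_(i | P i) F i) = \sum_(i | P i) rC (F i).
Proof. exact: (rmorph_sum (real_complex R)). Qed.

Lemma rC_inj : injective (@rC R).
Proof. by move=> x y []. Qed.

Lemma conj_rC (x : R) : Num.conj (rC x) = rC x.
Proof. by rewrite /rC /=; congr Complex; rewrite oppr0. Qed.

Lemma rC_ge0 (x : R) : (0 <= rC x) = (0 <= x).
Proof. by rewrite lecE /= eqxx. Qed.

Lemma rC_gt0 (x : R) : (0 < rC x) = (0 < x).
Proof. exact: ltcR. Qed.

Lemma divr_sqrtr (x : R) : 0 <= x -> x / Num.sqrt x = Num.sqrt x.
Proof.
rewrite le_eqVlt => /predU1P [<-|x_gt0]; first by rewrite sqrtr0 mul0r.
by rewrite -{1}(sqr_sqrtr (ltW x_gt0)) expr2 mulfK // gt_eqF ?sqrtr_gt0.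
Qed.

Definition sqmod (z : C) : R := complex.Re z ^+ 2 + complex.Im z ^+ 2.

Lemma conjC_mul_sqmod (z : C) : Num.conj z * z = rC (sqmod z).
Proof. by case: z => x y; rewrite /sqmod /rC /=; congr Complex; ring. Qed.

Lemma sqmod_ge0 (z : C) : 0 <= sqmod z.
Proof. by rewrite addr_ge0 ?sqr_ge0. Qed.

Lemma sqmodM (z w : C) : sqmod (z * w) = sqmod z * sqmod w.
Proof.
apply: rC_inj; rewrite rCM -!conjC_mul_sqmod rmorphM /=; ring.
Qed.

Lemma sqmod_rC (x : R) : sqmod (rC x) = x ^+ 2.
Proof. by rewrite /sqmod /= expr0n addr0. Qed.

End ComplexScalars.

Section LinearAlgebra.
Variables (R : realType) (T : finType).
Local Notation C := R[i].
Local Notation vec := (vec R T).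
Local Notation op := (op R T).

Definition delta (j : T) : vec := fun i => (i == j)%:R.

Definition herm (A : op) : Prop := forall i j, A i j = Num.conj (A j i).

Lemma opapp_delta (A : op) i j : opapp A (delta j) i = A i j.
Proof.
rewrite /opapp (bigD1 j) //= /delta eqxx mulr1 big1 ?addr0 // => k /negbTE ->.
by rewrite mulr0.
Qed.

Lemma op_ext (A B : op) : (forall w, opapp A w = opapp B w) -> A = B.
Proof. by move=> AB; apply/funext => i; apply/funext => j; rewrite -!opapp_delta AB. Qed.

Lemma opapp_mul (A B : op) w : opapp (opmul A B) w = opapp A (opapp B w).
Proof.
apply/funext => i; rewrite /opapp /opmul.
under eq_bigr do rewrite mulr_suml.
rewrite exchange_big /=; apply: eq_bigr => k _.
by rewrite mulr_sumr; apply: eq_bigr => j _; rewrite mulrA.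
Qed.

Lemma opapp_scale (A : op) (c : C) w :
  opapp A (fun i => c * w i) = fun i => c * opapp A w i.
Proof. by apply/funext => i; rewrite /opapp mulr_sumr; apply: eq_bigr => j _ /=; ring. Qed.

Lemma opapp_add (A : op) w w' :
  opapp A (fun i => w i + w' i) = fun i => opapp A w i + opapp A w' i.
Proof. by apply/funext => i; rewrite /opapp -big_split; apply: eq_bigr => j _ /=; ring. Qed.

Lemma opapp_sub (A : op) w w' :
  opapp A (fun i => w i - w' i) = fun i => opapp A w i - opapp A w' i.
Proof. by apply/funext => i; rewrite /opapp -sumrB; apply: eq_bigr => j _ /=; ring. Qed.

Lemma opapp_opscale (A : op) (c : C) w :
  opapp (fun i j => A i j * c) w = fun i => c * opapp A w i.
Proof. by apply/funext => i; rewrite /opapp mulr_sumr; apply: eq_bigr => j _ /=; ring. Qed.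

Lemma opapp0l (w : vec) : opapp (fun _ _ : T => 0) w = fun _ => 0.
Proof. by apply/funext => i; rewrite /opapp big1 // => j _; rewrite mul0r. Qed.

Lemma opapp_opsub (A B : op) w :
  opapp (opsub A B) w = fun i => opapp A w i - opapp B w i.
Proof.
by apply/funext => i; rewrite /opapp /opsub -sumrB; apply: eq_bigr => j _ /=; ring.
Qed.

Lemma opapp_dens (u w : vec) : opapp (dens u) w = fun i => inner u w * u i.
Proof.
by apply/funext => i; rewrite /opapp /inner /dens mulr_suml; apply: eq_bigr => j _ /=; ring.
Qed.

Lemma inner_linr (x y z : vec) (b c : C) :
  inner x (fun i => b * y i + c * z i) = b * inner x y + c * inner x z.
Proof. by rewrite /inner !mulr_sumr -big_split; apply: eq_bigr => j _ /=; ring. Qed.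

Lemma inner_scaler (x y : vec) (c : C) : inner x (fun i => c * y i) = c * inner x y.
Proof. by rewrite /inner mulr_sumr; apply: eq_bigr => j _ /=; ring. Qed.

Lemma inner0r (x : vec) : inner x (fun _ => 0) = 0.
Proof. by rewrite /inner big1 // => j _; rewrite mulr0. Qed.

Lemma inner_delta (x : vec) i : inner x (delta i) = Num.conj (x i).
Proof.
rewrite /inner (bigD1 i) //= /delta eqxx mulr1 big1 ?addr0 // => k /negbTE ->.
by rewrite mulr0.
Qed.

Lemma inner_conj (x y : vec) : inner y x = Num.conj (inner x y).
Proof.
rewrite /inner rmorph_sum; apply: eq_bigr => j _.
by rewrite rmorphM /= conjCK mulrC.
Qed.

Lemma inner_self (z : vec) : inner z z = rC (\sum_i sqmod (z i)).
Proof. by rewrite rC_sum; apply: eq_bigr => i _; rewrite conjC_mul_sqmod. Qed.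

Lemma inner_self_ge0 (z : vec) : 0 <= inner z z.
Proof. by rewrite inner_self rC_ge0 sumr_ge0 // => i _; apply: sqmod_ge0. Qed.

Lemma inner_self_eq0 (z : vec) : inner z z = 0 -> z = fun _ => 0.
Proof.
move=> z0; apply/funext => i.
have ge0 j : 0 <= Num.conj (z j) * z j by rewrite conjC_mul_sqmod rC_ge0 sqmod_ge0.
have /eqP := psumr_eq0P (fun j _ => ge0 j) z0 (i := i) isT.
by rewrite mulrC mul_conjC_eq0 => /eqP.
Qed.

Lemma unit_vec_neq0 (z : vec) : is_unit_vec z -> exists i, z i != 0.
Proof.
case: (pselect (exists i, z i != 0)) => // nz z1.
have z0 : z = fun _ => 0.
  by apply/funext => i; apply/eqP/negPn/negP => zi; apply: nz; exists i.
by move: z1; rewrite /is_unit_vec z0 inner0r => /esym/eqP; rewrite oner_eq0.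
Qed.

Lemma inner_opapp_adj (A : op) x y :
  inner (opapp A x) y = inner x (opapp (opadj A) y).
Proof.
rewrite /inner /opapp /opadj.
under eq_bigr do rewrite rmorph_sum /= mulr_suml.
rewrite exchange_big /=; apply: eq_bigr => j _.
by rewrite mulr_sumr; apply: eq_bigr => i _; rewrite rmorphM /=; ring.
Qed.

Lemma herm_adj (A : op) : herm A -> opadj A = A.
Proof. by move=> hA; apply/funext => i; apply/funext => j; rewrite /opadj -hA. Qed.

Lemma psd_adj_mul (A : op) : psd (opmul (opadj A) A).
Proof.
split=> [i j|w]; first by rewrite /opmul rmorph_sum; apply: eq_bigr => k _;
  rewrite rmorphM /opadj /= conjCK mulrC.
by rewrite opapp_mul -inner_opapp_adj inner_self_ge0.
Qed.

Lemma herm_kernel_sqr (S : op) x :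
  herm S -> opapp (opmul S S) x = (fun _ => 0) -> opapp S x = (fun _ => 0).
Proof.
move=> hS SSx; apply: inner_self_eq0.
by rewrite inner_opapp_adj herm_adj // -opapp_mul SSx inner0r.
Qed.

Lemma psd_neg_eigen_eq0 (S : op) (c : C) z :
  psd S -> 0 < c -> opapp S z = (fun i => - c * z i) -> z = fun _ => 0.
Proof.
move=> [_ Spos] c0 Sz; apply/inner_self_eq0/le_anti.
rewrite inner_self_ge0 andbT; have := Spos z.
by rewrite Sz inner_scaler mulNr oppr_ge0 pmulr_rle0.
Qed.

End LinearAlgebra.

Section SquareRoot.
Variables (R : realType) (T : finType).
Local Notation C := R[i].
Local Notation vec := (vec R T).
Local Notation op := (op R T).

Lemma herm_opmul_self (S : op) : herm S -> herm (opmul S S).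
Proof.
move=> hS i j; rewrite /opmul rmorph_sum; apply: eq_bigr => k _.
by rewrite rmorphM /= -!hS mulrC.
Qed.

Lemma opapp_scaled_idem (M : op) (q : R) y :
  opmul M M = (fun i j => M i j * rC q) ->
  opapp M (opapp M y) = fun i => rC q * opapp M y i.
Proof. by move=> MM; rewrite -opapp_mul MM opapp_opscale. Qed.

Lemma herm_sqr_eq0 (M : op) : herm M ->
  opmul M M = (fun i j => M i j * rC 0) -> M = fun _ _ => 0.
Proof.
move=> hM MM; apply: op_ext => x; rewrite opapp0l (herm_kernel_sqr hM) //.
by rewrite opapp_mul (opapp_scaled_idem _ MM); apply/funext => i; rewrite mul0r.
Qed.

(* A psd square root [S] of [M] with [M^2 = q M] kills [ker M] and acts as [sqrt q]
   on [range M], hence [S = M / sqrt q]. *)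
Lemma psd_sqrt_scaled_idem (S M : op) (q : R) : 0 <= q -> psd S ->
  opmul S S = M -> opmul M M = (fun i j => M i j * rC q) ->
  S = fun i j => M i j * rC (Num.sqrt q)^-1.
Proof.
move=> q_ge0 Spsd SSM MM; have hS := Spsd.1.
have SS y : opapp S (opapp S y) = opapp M y by rewrite -opapp_mul SSM.
apply: op_ext => x; rewrite opapp_opscale.
have [q0|q_neq0] := eqVneq q 0.
  have hM : herm M by rewrite -SSM; apply: herm_opmul_self.
  have M0 : M = fun _ _ => 0 by apply: herm_sqr_eq0; rewrite // -q0.
  rewrite (herm_kernel_sqr hS) ?SSM M0 ?opapp0l //.
  by apply/funext => i; rewrite mulr0.
have q_gt0 : 0 < q by rewrite lt0r q_neq0.
pose s := rC (Num.sqrt q).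
have ss : s * s = rC q by rewrite -rCM -expr2 sqr_sqrtr.
have s_gt0 : 0 < s by rewrite rC_gt0 sqrtr_gt0.
pose x1 := fun i => rC q^-1 * opapp M x i.
have Mx1 : opapp M x1 = opapp M x.
  rewrite opapp_scale (opapp_scaled_idem _ MM); apply/funext => i.
  by rewrite mulrA -rCM mulVf ?mul1r.
have Sx0 : opapp S (fun i => x i - x1 i) = fun _ => 0.
  by apply: (herm_kernel_sqr hS); rewrite opapp_mul SS opapp_sub Mx1;
    apply/funext => i; rewrite subrr.
have Sx1 : opapp S x1 = fun i => s * x1 i.
  have Mx_x1 : opapp M x = fun i => rC q * x1 i.
    by apply/funext => i; rewrite mulrA -rCM divff ?mul1r.
  have Sz : opapp S (fun i => opapp S x1 i - s * x1 i)
      = fun i => - s * (opapp S x1 i - s * x1 i).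
    by rewrite opapp_sub opapp_scale SS Mx1 Mx_x1 -ss; apply/funext => i; ring.
  have /(congr1 (fun f => f _)) z0 := psd_neg_eigen_eq0 Spsd s_gt0 Sz.
  by apply/funext => i; apply/eqP; rewrite -subr_eq0 z0.
rewrite [in LHS](_ : x = fun i => (x i - x1 i) + x1 i); last first.
  by apply/funext => i; rewrite subrK.
rewrite opapp_add Sx0 Sx1; apply/funext => i.
rewrite add0r /x1 mulrA -rCM; congr (rC _ * _).
by rewrite -[in RHS](divr_sqrtr (ltW q_gt0)) invf_div.
Qed.

Lemma sqrtm_scaled_idem (X : op) (q : R) : psd X -> 0 <= q ->
  opmul X X = (fun i j => X i j * rC q) ->
  sqrtm X = fun i j => X i j * rC (Num.sqrt q)^-1.
Proof.
move=> Xpsd q_ge0 XX; pose S0 := fun i j => X i j * rC (Num.sqrt q)^-1.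
have S0psd : psd S0.
  split=> [i j|w]; first by rewrite /S0 rmorphM /= conj_rC -Xpsd.1.
  rewrite opapp_opscale inner_scaler mulr_ge0 ?Xpsd.2 //.
  by rewrite rC_ge0 invr_ge0 sqrtr_ge0.
have S0sq : opmul S0 S0 = X.
  have [q0|q_neq0] := eqVneq q 0.
    rewrite /S0; move: XX; rewrite q0 => /(herm_sqr_eq0 Xpsd.1) ->.
    apply: op_ext => w; rewrite opapp_mul !opapp_opscale !opapp0l.
    by apply/funext => i; rewrite mulr0.
  apply: op_ext => w.
  rewrite opapp_mul !opapp_opscale opapp_scale (opapp_scaled_idem _ XX).
  apply/funext => i; rewrite !mulrA -!rCM -invfM -expr2 sqr_sqrtr //.
  by rewrite mulVf ?mul1r.
have ex : exists S : op, psd S /\ opmul S S = X by exists S0.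
have [Spsd SS] := epsilon_spec (inhabits (fun _ _ => 0 : C))
  (fun S : op => psd S /\ opmul S S = X) ex.
exact: psd_sqrt_scaled_idem.
Qed.

End SquareRoot.

Section PureStates.
Variables (R : realType) (T : finType) (u v : vec R T).
Hypotheses (hu : is_unit_vec u) (hv : is_unit_vec v).
Local Notation C := R[i].
Local Notation D := (opsub (dens u) (dens v)).
Local Notation X := (opmul (opadj D) D).
Local Notation q := (1 - sqmod (inner u v)).

Let span2 (x y : C) : vec R T := fun i => x * u i + y * v i.

Lemma opapp_dens_sub w : opapp D w = span2 (inner u w) (- inner v w).
Proof. by rewrite opapp_opsub !opapp_dens; apply/funext => i; rewrite /span2; ring. Qed.

Lemma herm_dens_sub : herm D.
Proof. by move=> i j; rewrite /opsub /dens rmorphB !rmorphM /= !conjCK; ring. Qed.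

Lemma opapp_dens_sub2_span2 x y :
  opapp D (opapp D (span2 x y)) = span2 (rC q * x) (rC q * y).
Proof.
have a_conj : inner v u = Num.conj (inner u v) by rewrite inner_conj.
rewrite !opapp_dens_sub !inner_linr hu hv a_conj /span2 rCB rC1 -conjC_mul_sqmod.
by apply/funext => i; ring.
Qed.

Lemma opapp_adj_dens_sub w : opapp X w = opapp D (opapp D w).
Proof. by rewrite herm_adj ?opapp_mul //; apply: herm_dens_sub. Qed.

Lemma opapp_dens_sub3 w : opapp D (opapp D (opapp D w)) = fun i => rC q * opapp D w i.
Proof.
rewrite [opapp D w]opapp_dens_sub opapp_dens_sub2_span2.
by apply/funext => i; rewrite /span2; ring.
Qed.

Lemma adj_dens_sub_scaled_idem : opmul X X = (fun i j => X i j * rC q).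
Proof.
apply: op_ext => w.
by rewrite opapp_mul opapp_opscale !opapp_adj_dens_sub opapp_dens_sub3.
Qed.

Lemma sqmod_inner_le1 : 0 <= q.
Proof.
have u_span : span2 1 0 = u by apply/funext => i; rewrite /span2; ring.
have Xu : opapp X u = fun i => rC q * u i.
  rewrite opapp_adj_dens_sub; have := opapp_dens_sub2_span2 1 0; rewrite u_span => ->.
  by apply/funext => i; rewrite /span2; ring.
by have := (psd_adj_mul D).2 u; rewrite Xu inner_scaler hu mulr1 rC_ge0.
Qed.

Lemma optr_adj_dens_sub : optr X = rC (2 * q).
Proof.
have Xii i : X i i = (Num.conj (u i) - Num.conj (v i) * inner u v) * u i
    - (Num.conj (u i) * Num.conj (inner u v) - Num.conj (v i)) * v i.
  rewrite -opapp_delta opapp_adj_dens_sub [opapp D _]opapp_dens_sub.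
  by rewrite opapp_dens_sub /span2 !inner_linr !inner_delta hu hv -inner_conj; ring.
have -> : rC (2 * q) = inner u u - inner u v * inner v u
    - Num.conj (inner u v) * inner u v + inner v v.
  rewrite hu hv (inner_conj u v) rCM rCB rC1 -conjC_mul_sqmod.
  by rewrite rC_nat; ring.
rewrite /optr; under eq_bigr do rewrite Xii.
by rewrite /inner !mulr_sumr -!sumrB -big_split /=; apply: eq_bigr => i _; ring.
Qed.

Lemma trnorm_dens_sub : trnorm D = 2 * Num.sqrt q.
Proof.
rewrite /trnorm (sqrtm_scaled_idem (psd_adj_mul D) sqmod_inner_le1
  adj_dens_sub_scaled_idem) /optr -mulr_suml -/(optr X) optr_adj_dens_sub -rCM /=.
by rewrite -mulrA divr_sqrtr // sqmod_inner_le1.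
Qed.

End PureStates.

Section Restriction.
Variables (R : realType) (T : finType).
Implicit Types (P : pred T) (u : vec R T).

Definition vmass P u : R := \sum_(i | P i) sqmod (u i).

Definition vrestrict P u : vec R T :=
  fun i => if P i then u i * rC (Num.sqrt (vmass P u))^-1 else 0.

Lemma vmass_predC P u : is_unit_vec u -> vmass (predC P) u = 1 - vmass P u.
Proof.
move=> hu; have : \sum_i sqmod (u i) = 1 by apply: rC_inj; rewrite -inner_self hu.
by rewrite (bigID P) /= => <-; rewrite addrC addrK.
Qed.

Lemma vrestrict_neq0 P u i : vrestrict P u i != 0 -> P i.
Proof. by rewrite /vrestrict; case: (P i); rewrite ?eqxx. Qed.

Lemma inner_vrestrictE P u (w : vec R T) :
  inner w (vrestrict P u)
  = (\sum_(i | P i) Num.conj (w i) * u i) * rC (Num.sqrt (vmass P u))^-1.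
Proof.
rewrite /inner mulr_suml [RHS]big_mkcond; apply: eq_bigr => i _.
by rewrite /vrestrict; case: (P i); rewrite ?mulr0 ?mulrA.
Qed.

Lemma inner_vrestrict P u : 0 < vmass P u ->
  inner u (vrestrict P u) = rC (Num.sqrt (vmass P u)).
Proof.
move=> pos; rewrite inner_vrestrictE.
under eq_bigr do rewrite conjC_mul_sqmod.
by rewrite -rC_sum -rCM divr_sqrtr // ltW.
Qed.

Lemma vrestrict_unit P u : 0 < vmass P u -> is_unit_vec (vrestrict P u).
Proof.
move=> pos; rewrite /is_unit_vec inner_vrestrictE.
rewrite (eq_bigr (fun i => rC (sqmod (u i)) * rC (Num.sqrt (vmass P u))^-1)).
  rewrite -mulr_suml -rC_sum -!rCM -/(vmass P u) divr_sqrtr ?ltW //.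
  by rewrite divff ?rC1 // gt_eqF ?sqrtr_gt0.
by move=> i Pi; rewrite /vrestrict Pi rmorphM /= conj_rC mulrAC conjC_mul_sqmod.
Qed.

Lemma trnorm_vrestrict P u : is_unit_vec u -> 0 < vmass P u ->
  trnorm (opsub (dens u) (dens (vrestrict P u))) = 2 * Num.sqrt (vmass (predC P) u).
Proof.
move=> hu pos; rewrite (trnorm_dens_sub hu (vrestrict_unit pos)) inner_vrestrict //.
by rewrite sqmod_rC sqr_sqrtr ?vmass_predC // ltW.
Qed.

End Restriction.

Section DiagonalOperators.
Variables (R : realType) (T : finType).
Local Notation C := R[i].
Local Notation vec := (vec R T).

Definition diagop (d : T -> C) : op R T := fun s t => if s == t then d s else 0.

Lemma opapp_diagop d w : opapp (diagop d) w = fun s => d s * w s.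
Proof.
apply/funext => s; rewrite /opapp /diagop (bigD1 s) //= eqxx big1 ?addr0 // => t.
by rewrite eq_sym => /negbTE ->; rewrite mul0r.
Qed.

Lemma opapp_diagop_delta d t : opapp (diagop d) (delta R t) = fun s => d t * delta R t s.
Proof.
rewrite opapp_diagop; apply/funext => s.
by rewrite /delta; case: eqP => [->|]; rewrite ?mulr0.
Qed.

Lemma eigenvector_diagop_delta d t : eigenvector (diagop d) (delta R t).
Proof.
split; first by exists t; rewrite /delta eqxx oner_eq0.
by exists (d t); rewrite opapp_diagop_delta.
Qed.

(* Empty classes are padded with the eigenvector [delta t0] and coefficient [0]. *)
Lemma comb_of_eigvecs_diagop (I : finType) (cls : T -> I) d v (t0 : T) :
  (forall s t, cls s = cls t -> d s = d t) -> comb_of_eigvecs (diagop d) v #|I|.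
Proof.
move=> d_cls; pose piece N : vec := fun s => if cls s == N then v s else 0.
pose nz N := [exists s, piece N s != 0].
exists #|I|, (fun k => if nz (enum_val k) then piece (enum_val k) else delta R t0),
  (fun k => (nz (enum_val k))%:R); split => //; split.
  move=> k; case: ifP => [/existsP [s ps]|_]; last exact: eigenvector_diagop_delta.
  split; first by exists s.
  exists (d s); rewrite opapp_diagop; apply/funext => t; rewrite /piece.
  case: eqP => [clt|]; last by rewrite !mulr0.
  move: ps; rewrite /piece; case: ifP => [/eqP cls_s _|_]; last by rewrite eqxx.
  by rewrite (d_cls t s) // clt cls_s.
apply/funext => s; rewrite -(big_enum_val (A := predT)
  (fun N => (nz N)%:R * (if nz N then piece N else delta R t0) s)) /=.
rewrite (bigD1 (cls s)) //= big1 => [|N /negbTE NclS]; last first.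
  case: ifP => [_|/negbT]; first by rewrite /piece eq_sym NclS mulr0.
  by rewrite mul0r.
rewrite addr0; case: ifP => [_|/negbT/existsPn/(_ s)]; first by rewrite mul1r /piece eqxx.
by rewrite /piece eqxx negbK => /eqP ->; rewrite mul0r.
Qed.

Lemma energies_diagop d v l :
  energies (diagop d) v l -> exists2 s, v s != 0 & d s = rC l.
Proof.
move=> [w [Hw /negP wv]]; apply: contrapT => nos; apply: wv.
apply/eqP; rewrite /inner big1 // => s _.
have [ws|ws] := eqVneq (w s) 0; first by rewrite ws rmorph0 mul0r.
have [vs|vs] := eqVneq (v s) 0; first by rewrite vs mulr0.
exfalso; apply: nos; exists s => //; apply: (mulIf ws).
by have := congr1 (fun f => f s) Hw; rewrite opapp_diagop.
Qed.

Lemma energy_spread_diagop_le (e : T -> R) v (t : T) (lo hi : R) : v t != 0 ->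
  (forall s, v s != 0 -> lo <= e s <= hi) ->
  energy_spread (diagop (fun s => rC (e s))) v <= hi - lo.
Proof.
move=> vt bnd; have ne : energies (diagop (fun s => rC (e s))) v !=set0.
  exists (e t), (delta R t); split; first exact: opapp_diagop_delta.
  by rewrite inner_conj inner_delta conjCK.
have bnd' l : energies (diagop (fun s => rC (e s))) v l -> lo <= l <= hi.
  by move=> /energies_diagop [s vs /rC_inj <-]; apply: bnd.
rewrite /energy_spread lerB //.
  by apply: ge_sup => // l /bnd' /andP [].
by apply: lb_le_inf => // l /bnd' /andP [].
Qed.

End DiagonalOperators.

Section ProductWeights.
Variables (R : comRingType) (X : finType) (w g : X -> R).
Hypotheses (w_sum1 : \sum_x w x = 1) (wg_sum0 : \sum_x w x * g x = 0).

Lemma sum_prod_weights n : \sum_(s : {ffun 'I_n -> X}) \prod_i w (s i) = 1.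
Proof. by rewrite -(bigA_distr_bigA (fun _ => w)) big1. Qed.

Lemma sum_prod_weights_cross n (i j : 'I_n) :
  \sum_(s : {ffun 'I_n -> X}) (\prod_k w (s k)) * g (s i) * g (s j)
  = if j == i then \sum_x w x * g x ^+ 2 else 0.
Proof.
pose F k x := w x * (if k == i then g x else 1) * (if k == j then g x else 1).
have pick k0 (s : {ffun 'I_n -> X}) : \prod_k (if k == k0 then g (s k) else 1) = g (s k0).
  by rewrite -big_mkcond big_pred1_eq.
transitivity (\sum_(s : {ffun 'I_n -> X}) \prod_k F k (s k)).
  by apply: eq_bigr => s _; rewrite !big_split /= !pick.
rewrite -(bigA_distr_bigA F) (bigD1 i) //= /F eqxx.
have [<-|/negbTE ji] := eqVneq j i.
  rewrite [X in _ * X]big1 => [|k /negbTE ->]; last first.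
    by rewrite -[RHS]w_sum1; apply: eq_bigr => x _; rewrite !mulr1.
  by rewrite mulr1; apply: eq_bigr => x _; rewrite mulrA.
by rewrite (eq_bigr _ (fun x _ => mulr1 _)) wg_sum0 mul0r.
Qed.

Lemma sum_prod_weights_sqr_sum n :
  \sum_(s : {ffun 'I_n -> X}) (\prod_k w (s k)) * (\sum_i g (s i)) ^+ 2
  = n%:R * \sum_x w x * g x ^+ 2.
Proof.
transitivity (\sum_(s : {ffun 'I_n -> X}) \sum_(i < n) \sum_(j < n)
    (\prod_k w (s k)) * g (s i) * g (s j)).
  apply: eq_bigr => s _; rewrite expr2 mulr_suml mulr_sumr; apply: eq_bigr => i _.
  by rewrite !mulr_sumr; apply: eq_bigr => j _; rewrite mulrA.
rewrite exchange_big; under eq_bigr do rewrite exchange_big.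
under eq_bigr => i _ do rewrite (eq_bigr _ (fun j _ => sum_prod_weights_cross i j))
  -big_mkcond big_pred1_eq.
by rewrite sumr_const card_ord mulr_natl.
Qed.

End ProductWeights.

Lemma chebyshev_sum (R : realDomainType) (T : finType) (W G : T -> R) (t : R) :
  (forall s, 0 <= W s) -> 0 <= t ->
  t ^+ 2 * \sum_(s | t < `|G s|) W s <= \sum_s W s * G s ^+ 2.
Proof.
move=> W_ge0 t_ge0; rewrite mulr_sumr [leRHS](bigID (fun s => t < `|G s|)) /=.
rewrite -[leLHS]addr0 lerD ?sumr_ge0 // => [|s _]; last by rewrite mulr_ge0 ?sqr_ge0.
apply: ler_sum => s tG; rewrite mulrC ler_wpM2l // -[G s ^+ 2]real_normK ?num_real //.
by apply: lerXn2r; rewrite ?nnegrE ?normr_ge0 // ltW.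
Qed.

Section SeqType.
Variables (n : nat) (X : finType).

Definition seq_type (s : {ffun 'I_n -> X}) : {ffun X -> 'I_n.+1} :=
  [ffun x => inord #|[pred i | s i == x]|].

Lemma sum_seq_type (V : nmodType) (f : X -> V) (s : {ffun 'I_n -> X}) :
  \sum_i f (s i) = \sum_x f x *+ seq_type s x.
Proof.
rewrite (partition_big s predT) //=; apply: eq_bigr => x _.
rewrite ffunE inordK; last by rewrite ltnS (leq_trans (max_card _)) ?card_ord.
by rewrite -sumr_const; apply: eq_big => [i|i /eqP ->] //; rewrite inE.
Qed.

End SeqType.

Section NatPowR.
Variable R : realType.

Lemma natr_powR_le1 (g : R) n : g <= 0 -> n%:R `^ g <= 1.
Proof.
move=> g_le0; case: n => [|n].
  by have [->|g0] := eqVneq g 0; rewrite ?powRr0 // powR0 ?ler01.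
by rewrite -[leRHS](powRr0 n.+1%:R); apply: ler_powR; rewrite ?ler1n.
Qed.

Lemma div_powR_sqr (x g : R) : 0 < x -> x / (x `^ g) ^+ 2 = x `^ (1 - 2 * g).
Proof.
move=> x_gt0; rewrite powRB ?(gt_eqF x_gt0) ?implybT // powRr1 ?(ltW x_gt0) //.
by rewrite [2 * g]mulrC powRrM powR_mulrn ?powR_ge0.
Qed.

Lemma natr_powR_cvg0 (g : R) : g < 0 -> (fun n : nat => n%:R `^ g) @ \oo --> 0.
Proof.
move=> g_lt0; apply/cvgr0Pnorm_lt => e e_gt0.
have ng_gt0 : 0 < - g by rewrite oppr_gt0.
pose N := e^-1 `^ (- g)^-1.
have N_ge0 : 0 <= N by apply: powR_ge0.
apply: filterS (nbhs_infty_gtr N) => n /= Nn.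
rewrite ger0_norm ?powR_ge0 // -[g]opprK powRN -[e]invrK ltf_pV2 ?posrE ?invr_gt0 //;
  last by rewrite powR_gt0 // (le_lt_trans N_ge0).
have -> : e^-1 = N `^ (- g) by rewrite -powRrM mulVf ?gt_eqF // powRr1 // invr_ge0 ltW.
by apply: gt0_ltr_powR; rewrite // nnegrE (le_trans N_ge0) ?ltW.
Qed.

End NatPowR.

Section TypicalSubspace.
Variables (R : realType) (m : nat) (a : 'I_m -> R) (psi : vec R 'I_m) (alpha : R).
Hypotheses (a_ge0 : forall x, 0 <= a x) (hpsi : is_unit_vec psi) (alpha_gt : 1 / 2 < alpha).
Local Notation sa := (\sum_x a x).

Definition prob (x : 'I_m) : R := sqmod (psi x).
Definition mean_energy : R := \sum_x prob x * a x.
Definition energy n (s : seqs n m) : R := \sum_i a (s i).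

Definition typical n : pred (seqs n m) :=
  fun s => `|energy s - n%:R * mean_energy| <= 2 * n%:R `^ alpha * sa.
Arguments typical : clear implicits.

Definition chi n : vec R (seqs n m) := vrestrict (typical n) (tens_pow psi n).
Arguments chi : clear implicits.

Lemma sum_prob : \sum_x prob x = 1.
Proof. by apply: rC_inj; rewrite -inner_self hpsi. Qed.

Lemma sqmod_tens_pow n s : sqmod (tens_pow psi n s) = \prod_i prob (s i).
Proof.
have sqmod1 : sqmod (1 : R[i]) = 1 by rewrite -rC1 sqmod_rC expr1n.
by rewrite /tens_pow (big_morph (@sqmod R) (@sqmodM R) sqmod1).
Qed.

Lemma tens_pow_unit n : is_unit_vec (tens_pow psi n).
Proof.
rewrite /is_unit_vec inner_self (eq_bigr _ (fun s _ => sqmod_tens_pow s)).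
by rewrite sum_prod_weights ?sum_prob.
Qed.

Lemma abs_energy_sub_mean_le x : `|a x - mean_energy| <= sa.
Proof.
have a_le_sa y : a y <= sa by rewrite (bigD1 y) //= lerDl sumr_ge0.
have mean_ge0 : 0 <= mean_energy.
  by rewrite sumr_ge0 // => y _; rewrite mulr_ge0 ?sqmod_ge0.
have mean_le : mean_energy <= sa.
  rewrite -[leRHS]mul1r -sum_prob mulr_suml ler_sum // => y _.
  by rewrite ler_wpM2l ?sqmod_ge0.
have := a_le_sa x; have := a_ge0 x.
by rewrite ler_norml; move=> *; apply/andP; split; lra.
Qed.

Lemma energy_sub_mean n (s : seqs n m) :
  energy s - n%:R * mean_energy = \sum_i (a (s i) - mean_energy).
Proof. by rewrite sumrB sumr_const card_ord mulr_natl. Qed.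

Lemma variance_energy_le n :
  \sum_(s : seqs n m) sqmod (tens_pow psi n s) * (energy s - n%:R * mean_energy) ^+ 2
  <= n%:R * sa ^+ 2.
Proof.
have centered : \sum_x prob x * (a x - mean_energy) = 0.
  by rewrite (eq_bigr _ (fun x _ => mulrBr _ _ _)) sumrB -mulr_suml sum_prob mul1r subrr.
under eq_bigr do rewrite sqmod_tens_pow energy_sub_mean.
rewrite (sum_prod_weights_sqr_sum sum_prob centered) ler_wpM2l //.
rewrite -[leRHS]mul1r -sum_prob mulr_suml ler_sum // => x _.
rewrite ler_wpM2l ?sqmod_ge0 // -real_normK ?num_real //.
by apply: lerXn2r; rewrite ?nnegrE ?sumr_ge0 ?abs_energy_sub_mean_le.
Qed.

Lemma vmass_atypical_le n :
  vmass (predC (typical n)) (tens_pow psi n) <= n%:R `^ (1 - 2 * alpha) / 4.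
Proof.
have rhs_ge0 : 0 <= n%:R `^ (1 - 2 * alpha) / 4 by rewrite divr_ge0 ?powR_ge0.
have sa_ge0 : 0 <= sa by apply: sumr_ge0.
have [n_sa0|n_sa_gt0] := eqVneq (n%:R * sa) 0.
  rewrite /vmass big_pred0 // => s; apply/negbF; rewrite /typical.
  apply: (@le_trans _ _ (n%:R * sa)); last by rewrite n_sa0 !mulr_ge0 ?powR_ge0.
  rewrite energy_sub_mean (le_trans (ler_norm_sum _ _ _)) //.
  rewrite (le_trans (ler_sum _ (fun i _ => abs_energy_sub_mean_le (s i)))) //.
  by rewrite sumr_const card_ord mulr_natl.
move: n_sa_gt0; rewrite mulf_eq0 negb_or => /andP [n_neq0 sa_neq0].
have n_gt0 : 0 < n%:R :> R by rewrite lt0r n_neq0 ler0n.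
have sa_gt0 : 0 < sa by rewrite lt0r sa_neq0 sa_ge0.
pose N := n%:R `^ alpha; have N_gt0 : 0 < N by rewrite powR_gt0.
have t_ge0 : 0 <= 2 * N * sa by rewrite !mulr_ge0 ?ltW.
have := chebyshev_sum (fun s => energy s - n%:R * mean_energy)
  (fun s => sqmod_ge0 (tens_pow psi n s)) t_ge0.
move=> /le_trans/(_ (variance_energy_le n)).
rewrite (eq_bigl (predC (typical n))) => [cheb|s]; last by rewrite /= /typical -ltNge.
rewrite -div_powR_sqr // -/N -(@ler_pM2l _ ((2 * N * sa) ^+ 2)) ?exprn_gt0 ?mulr_gt0 //.
apply: (le_trans cheb); rewrite [leRHS](_ : _ = n%:R * sa ^+ 2) //.
by field; rewrite gt_eqF.
Qed.

Lemma vmass_typical_gt0 n : 0 < vmass (typical n) (tens_pow psi n).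
Proof.
have atyp := vmass_atypical_le n; rewrite (vmass_predC _ (tens_pow_unit n)) in atyp.
have : n%:R `^ (1 - 2 * alpha) / 4 <= 1 / 4.
  by rewrite ler_pM2r ?invr_gt0 // natr_powR_le1 //; move: alpha_gt; lra.
move: atyp; lra.
Qed.

Lemma chi_unit n : is_unit_vec (chi n).
Proof. exact/vrestrict_unit/vmass_typical_gt0. Qed.

Lemma trnorm_chi_le n :
  trnorm (opsub (dens (tens_pow psi n)) (dens (chi n))) <= n%:R `^ ((1 - 2 * alpha) / 2).
Proof.
rewrite (trnorm_vrestrict (tens_pow_unit n) (vmass_typical_gt0 n)).
have sqrt4 : Num.sqrt 4 = 2 :> R.
  by rewrite (_ : 4 = 2 ^+ 2) ?sqrtr_sqr ?ger0_norm // expr2; lra.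
rewrite powRrM powR12_sqrt ?powR_ge0 // -{1}sqrt4 -sqrtrM // ler_sqrt ?powR_ge0 //.
by rewrite mulrC -ler_pdivlMr // vmass_atypical_le.
Qed.

Lemma cvg_trnorm_chi :
  (fun n => trnorm (opsub (dens (tens_pow psi n)) (dens (chi n)))) @ \oo --> 0.
Proof.
have g_lt0 : (1 - 2 * alpha) / 2 < 0.
  by rewrite pmulr_llt0 ?invr_gt0 //; move: alpha_gt; lra.
apply: (squeeze_cvgr _ (cvg_cst (0 : R)) (natr_powR_cvg0 g_lt0)).
apply: nearW => n; rewrite trnorm_chi_le andbT.
by rewrite (trnorm_vrestrict (tens_pow_unit n) (vmass_typical_gt0 n)) mulr_ge0 ?sqrtr_ge0.
Qed.

Lemma hamAn_diagop n : hamAn a n = diagop (fun s => rC (energy s)).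
Proof. by []. Qed.

Lemma comb_of_eigvecs_chi n : comb_of_eigvecs (hamAn a n) (chi n) (n.+1 ^ m)%N.
Proof.
have [t _] := unit_vec_neq0 (chi_unit n).
have card_types : #|{ffun 'I_m -> 'I_n.+1}| = (n.+1 ^ m)%N by rewrite card_ffun !card_ord.
rewrite hamAn_diagop -card_types.
apply: (comb_of_eigvecs_diagop (cls := @seq_type n _) _ t).
by move=> s s' same_type; rewrite /energy !(sum_seq_type a) same_type.
Qed.

Lemma energy_spread_chi_le n :
  energy_spread (hamAn a n) (chi n) <= 4 * n%:R `^ alpha * sa.
Proof.
have [t chi_t] := unit_vec_neq0 (chi_unit n).
pose c := n%:R * mean_energy; pose T := 2 * n%:R `^ alpha * sa.
rewrite hamAn_diagop.
apply: le_trans (energy_spread_diagop_le (lo := c - T) (hi := c + T) chi_t _) _.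
- move=> s /vrestrict_neq0; rewrite /typical ler_norml /c /T => /andP [? ?].
  by apply/andP; split; lra.
- by rewrite /T; lra.
Qed.

End TypicalSubspace.

Theorem lemma6 (R : realType) (m : nat) (a : 'I_m -> R)
    (ha : forall x, 0 <= a x) (psi : vec R 'I_m) (hpsi : is_unit_vec psi)
    (alpha : R) (halpha1 : 1 / 2 < alpha) (halpha2 : alpha < 1) :
  exists chi : forall n : nat, vec R (seqs n m),
    (forall n, is_unit_vec (chi n)) /\
    ((fun n : nat => trnorm (opsub (dens (tens_pow psi n)) (dens (chi n)))) @ \oo
       --> (0 : R)) /\
    (forall n, comb_of_eigvecs (hamAn a n) (chi n) (n.+1 ^ m)) /\
    (forall n, energy_spread (hamAn a n) (chi n)
                 <= 4 * (n%:R `^ alpha) * \sum_(x < m) a x).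
Proof.
(* The construction only uses [alpha > 1/2]. *)
exists (chi a psi alpha); split; first exact: chi_unit.
split; first exact: cvg_trnorm_chi.
split=> n; first exact: comb_of_eigvecs_chi.
exact: energy_spread_chi_le.
Qed.
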